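(* Let $n\ge 2$. For each $(a,b)\in\Omega_n$, the set $L^{(n)}_{(a,b)}:=L(\{1,\omega^a,j,\omega^bj\})$ is a reflection system for $\mathcal{D}_n$, and $$L^{(n)}_{(a,b)}=\{\omega^{ma}\}_{1\le m\le 2n/a}\cup\{\omega^{\ell b}j\}_{1\le \ell\le 2n/b}.$$ Every reflection system for $\mathcal{D}_n$ is equivalent to $L^{(n)}_{(a,b)}$ for some $(a,b)\in\Omega_n$. Moreover $|L^{(n)}_{(a,b)}|=\frac{2n}{a}+\frac{2n}{b}$, and these cardinalities are pairwise different for different $(a,b)\in\Omega_n$.
   Context: $\mathbb{H}$ is the real quaternion algebra with basis $1,i,j,k$. For $n\ge2$ let $\omega:=\cos(\pi/n)+i\sin(\pi/n)\in\mathbb{H}$ (a primitive $2n$-th root of unity) and $\mathcal{D}_n:=\langle\omega,j\rangle$, the dicyclic group of order $4n$. Let $\Omega_n:=\{(a,b): 1\le a\le b\le n,\ a\mid n,\ b\mid n,\ \gcd(a,b)=1\}$. For a group $K$ and $x,y\in K$ put $x\circ y:=xy^{-1}x$; for $X\subseteq K$, $L(X)$ is the smallest subset of $K$ containing $X$ and closed under $\circ$. A reflection system for a finite group $K$ is a subset $L\subseteq K$ generating $K$, closed under $\circ$, and containing $1$. Two reflection systems $L,L'$ for $K$ are equivalent if $L'=\phi(xL)$ or $L'=\phi(Lx)$ for some $x\in L$ and some automorphism $\phi$ of $K$. *)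

From HB Require Import structures.
From mathcomp Require Import all_boot all_order all_algebra.
From mathcomp Require Import all_classical all_reals all_analysis.
Set Implicit Arguments. Unset Strict Implicit. Unset Printing Implicit Defensive.
Import Order.TTheory GRing.Theory Num.Theory.
Local Open Scope ring_scope.

Section Quat.
Variable R : realType.

(* Real quaternions a + b i + c j + d k, stored as (((a, b), c), d). *)
Definition quat := (R * R * R * R)%type.

Definition qmk (a b c d : R) : quat := (a, b, c, d).

Definition qmul (p q : quat) : quat :=
  let: (a1, b1, c1, d1) := p in
  let: (a2, b2, c2, d2) := q in
  qmk (a1 * a2 - b1 * b2 - c1 * c2 - d1 * d2)
      (a1 * b2 + b1 * a2 + c1 * d2 - d1 * c2)
      (a1 * c2 - b1 * d2 + c1 * a2 + d1 * b2)
      (a1 * d2 + b1 * c2 - c1 * b2 + d1 * a2).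

Definition qone : quat := qmk 1 0 0 0.
Definition qi : quat := qmk 0 1 0 0.
Definition qj : quat := qmk 0 0 1 0.

(* inverse in H: conj(q) / |q|^2 (only used on nonzero quaternions) *)
Definition qinv (q : quat) : quat :=
  let: (a, b, c, d) := q in
  let N := a ^+ 2 + b ^+ 2 + c ^+ 2 + d ^+ 2 in
  qmk (a / N) (- b / N) (- c / N) (- d / N).

Definition qexp (q : quat) (m : nat) : quat := iter m (qmul q) qone.

Definition omega (n : nat) : quat :=
  qmk (cos (pi / n%:R)) (sin (pi / n%:R)) 0 0.

Inductive gen (X : set quat) : set quat :=
  | gen_base x : X x -> gen X x
  | gen_one : gen X qone
  | gen_mul x y : gen X x -> gen X y -> gen X (qmul x y)
  | gen_inv x : gen X x -> gen X (qinv x).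

Definition Dic (n : nat) : set quat := gen (fun q => q = omega n \/ q = qj).

Definition qcirc (x y : quat) : quat := qmul (qmul x (qinv y)) x.

Inductive Lclos (X : set quat) : set quat :=
  | Lclos_base x : X x -> Lclos X x
  | Lclos_circ x y : Lclos X x -> Lclos X y -> Lclos X (qcirc x y).

Definition reflection_system (K L : set quat) : Prop :=
  [/\ (forall x, L x -> K x),
      (forall x, gen L x <-> K x),
      (forall x y, L x -> L y -> L (qcirc x y)) &
      L qone].

(* automorphism of the group K (a function on quaternions, relevant on K) *)
Definition is_aut (K : set quat) (phi : quat -> quat) : Prop :=
  [/\ (forall x, K x -> K (phi x)),
      (forall x y, K x -> K y -> phi x = phi y -> x = y),
      (forall z, K z -> exists2 x, K x & phi x = z) &
      (forall x y, K x -> K y -> phi (qmul x y) = qmul (phi x) (phi y))].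

Definition rs_equiv (K L L' : set quat) : Prop :=
  exists x phi, [/\ L x, is_aut K phi &
    (forall q, L' q <-> exists2 y, L y & q = phi (qmul x y)) \/
    (forall q, L' q <-> exists2 y, L y & q = phi (qmul y x))].

Definition Lab (n a b : nat) : set quat :=
  Lclos (fun q => [\/ q = qone, q = qexp (omega n) a, q = qj |
                     q = qmul (qexp (omega n) b) qj]).

End Quat.

Definition Omega_n (n a b : nat) : bool :=
  [&& 0 < a, a <= b, b <= n, a %| n, b %| n & coprime a b]%N.

Arguments omega R n : clear implicits.
Arguments qj R : clear implicits.
Arguments qone R : clear implicits.
Arguments Dic R n : clear implicits.
Arguments Lab R n a b : clear implicits.

(* Write [omega ^ k * j ^ e] as [dic k e] (k modulo 2n).  On these coordinates
   [x o y = x y^-1 x] acts as [k, l |-> 2k - l] on two rotations and on two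
   reflections, while a rotation and a reflection (in either order) give the
   second one shifted by [n].  Hence the exponents of the rotations of a
   reflection system, and those of its reflections shifted by one of them [c],
   form subsets of Z containing 0 and n and closed under [k, l |-> 2k - l]; such
   a set is [d Z] for some [d | n].  So a reflection system is
   [{omega^(m a)} U {omega^(c + l b) j}], it generates [D_n] iff [gcd a b = 1],
   and the automorphism [j |-> omega^(-c) j] (preceded, when [a > b], by left
   multiplication with [omega^c j], which swaps rotations and reflections) maps
   it to [L(a,b)].  Finally [|L(a,b)| = 2n (a + b) / (a b)], and since
   [(a + b) / (a b)] is in lowest terms it determines [a b] and [a + b]. *)

From HB Require Import structures.
From mathcomp Require Import all_boot all_order all_algebra.
From mathcomp Require Import all_classical all_reals all_analysis.
From mathcomp Require Import ring lra zify.
Import Order.TTheory GRing.Theory Num.Theory.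
Set Implicit Arguments. Unset Strict Implicit. Unset Printing Implicit Defensive.
Local Open Scope ring_scope.

Lemma periodicz (U V : zmodType) (f : U -> V) (T : U) :
  periodic f T -> forall (z : int) a, f (a + T *~ z) = f a.
Proof.
move=> fT [m|m] a; first exact: periodicn.
by rewrite NegzE mulrNz -{2}(subrK (T *+ m.+1) a) periodicn.
Qed.

Lemma cos_eq1_lt2pi (R : realType) (x : R) :
  0 <= x < pi *+ 2 -> cos x = 1 -> x = 0.
Proof.
move=> /andP [x_ge0 x_lt2pi] cx1; apply/eqP; rewrite eq_le x_ge0 andbT leNgt.
apply/negP => x_gt0.
have half_pi : 0 < x / 2 < pi by apply/andP; split; lra.
have : cos ((x / 2) *+ 2) = 1 by rewrite -mulr_natr divfK.
rewrite cos_mulr2n cos2sin2 => /eqP; rewrite mulr2n.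
have := sin_gt0_pi half_pi; nra.
Qed.

Definition reflect_closed (P : int -> Prop) :=
  forall x y, P x -> P y -> P (x + x - y).

Section ReflectClosed.
Variable P : int -> Prop.
Hypotheses (P0 : P 0) (Pc : reflect_closed P).

Lemma reflect_closedN x : P x -> P (- x).
Proof. by move=> Px; rewrite -[- x]add0r -[0]addr0; exact: Pc. Qed.

Lemma reflect_closed_mul d : P d -> forall t : int, P (t * d).
Proof.
move=> Pd.
have Pnat (m : nat) : P (m%:Z * d) /\ P (m.+1%:Z * d).
  elim: m => [|m [IH1 IH2]]; first by rewrite mul0r mul1r.
  split => //; rewrite (_ : m.+2%:Z * d = m.+1%:Z * d + m.+1%:Z * d - m%:Z * d).
    exact: Pc.
  by rewrite -!mulrDl -mulrBl; congr (_ * _); lia.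
case=> m; first exact: (Pnat m).1.
by rewrite NegzE mulNr; apply: reflect_closedN; exact: (Pnat m).2.
Qed.

(* The least positive element [d] of [P] generates it: [P] is stable under
   [x |-> x - 2 t d], and a residue in [(0, 2 d)] other than [d] would give,
   possibly after reflecting through [d], a positive element below [d]. *)
Lemma reflect_closed_dvd (m : nat) : (0 < m)%N -> P m ->
  exists d : nat, [/\ (0 < d)%N, (d %| m)%N & forall k, P k <-> (d%:Z %| k)%Z].
Proof.
move=> m_gt0 Pm.
have ex_pos : exists d, (0 < d)%N && `[< P d%:Z >] by exists m; rewrite m_gt0 asboolT.
case: (ex_minnP ex_pos) => d /andP [d_gt0 /asboolP Pd] d_min.
have no_small y : P y -> 0 < y < d%:Z -> False.
  case: y => // y Py /andP [y_gt0 y_lt].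
  have : (d <= y)%N by apply: d_min; rewrite asboolT // andbT; lia.
  lia.
have dvd_of k : P k -> (d%:Z %| k)%Z.
  move=> Pk; set D := d%:Z + d%:Z.
  have dD : (d%:Z %| D)%Z by rewrite rpredD ?dvdzz.
  have r_ge0 : 0 <= (k %% D)%Z by apply: modz_ge0; rewrite /D; lia.
  have r_lt : (k %% D)%Z < D by apply: ltz_pmod; rewrite /D; lia.
  have Pr : P (k %% D)%Z.
    have := reflect_closedN (Pc (reflect_closed_mul Pd (k %/ D)%Z) Pk).
    by rewrite {3}(divz_eq k D) /D; congr P; ring.
  rewrite (divz_eq k D); move: (k %% D)%Z r_ge0 r_lt Pr => r r_ge0 r_lt Pr.
  apply: rpredD; first exact: dvdz_mull.
  have [r_lt_d|r_ge_d] := ltP r d%:Z.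
    have [->|r_neq0] := eqVneq r 0; first exact: dvdz0.
    by exfalso; apply: (no_small r Pr); lia.
  have [->|r_neq_d] := eqVneq r d%:Z; first exact: dvdzz.
  by exfalso; apply: (no_small (d%:Z + d%:Z - r) (Pc Pd Pr)); rewrite /D in r_lt; lia.
exists d; split => //; first exact: dvd_of Pm.
by move=> k; split; [exact: dvd_of | move=> /dvdzP [t ->]; exact: reflect_closed_mul].
Qed.

End ReflectClosed.

Lemma dvdz_mul_rep (N d : nat) (k : int) :
  (0 < N)%N -> (d %| N)%N -> (d%:Z %| k)%Z ->
  exists2 m : nat, (1 <= m <= N %/ d)%N & (N%:Z %| k - (m * d)%N%:Z)%Z.
Proof.
move=> N_gt0 d_dvd_N /dvdzP [t ->].
have d_gt0 : (0 < d)%N := dvdn_gt0 N_gt0 d_dvd_N.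
set D := (N %/ d)%N.
have D_gt0 : (0 < D)%N by rewrite divn_gt0 // dvdn_leq.
have ND : N%:Z = D%:Z * d%:Z by rewrite -PoszM divnK.
have r_ge0 : 0 <= ((t - 1) %% D)%Z by apply: modz_ge0; rewrite -lt0n.
have r_lt : ((t - 1) %% D)%Z < D%:Z by apply: ltz_pmod.
exists (absz ((t - 1) %% D)%Z).+1.
  by apply/andP; split => //; rewrite -ltz_nat gez0_abs.
rewrite ND PoszM -mulrBl dvdz_mul // -addn1 PoszD gez0_abs //.
apply/dvdzP; exists ((t - 1) %/ D)%Z; have := divz_eq (t - 1) D; lia.
Qed.

Lemma dvdz_mul_inj (N d m m' : nat) :
  (1 <= m <= N %/ d)%N -> (1 <= m' <= N %/ d)%N ->
  (N%:Z %| (m * d)%N%:Z - (m' * d)%N%:Z)%Z -> m = m'.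
Proof.
move=> /andP [m_ge1 m_le] /andP [m'_ge1 m'_le] N_dvd.
have d_gt0 : (0 < d)%N by case: d m_le {N_dvd m'_le} => //; rewrite divn0; lia.
move: m_le m'_le N_dvd; rewrite !leq_divRL // dvdzE /= => m_le m'_le N_dvd.
suff : `|(m * d)%N%:Z - (m' * d)%N%:Z|%N = 0%N.
  by move/eqP; rewrite absz_eq0 subr_eq0 eqz_nat eqn_pmul2r // => /eqP.
apply/eqP; apply: contraTT N_dvd; rewrite -lt0n => diff_gt0.
by rewrite gtnNdvd //; lia.
Qed.

Lemma gen_sub (R : realType) (X H : set (quat R)) :
  (forall x, X x -> H x) -> H (qone R) ->
  (forall x y, H x -> H y -> H (qmul x y)) -> (forall x, H x -> H (qinv x)) ->
  forall x, gen X x -> H x.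
Proof.
move=> XH H1 HM HV x; elim=> [y /XH //| //|y z _ Hy _ Hz|y _ Hy].
- exact: HM.
- exact: HV.
Qed.

Section Dicyclic.
Variables (R : realType) (n : nat).
Hypothesis n_gt0 : (0 < n)%N.

Definition angle (k : int) : R := k%:~R * (pi / n%:R).

(* [dic k e] is [omega ^ k * j ^ e]. *)
Definition dic (k : int) (e : bool) : quat R :=
  if e then qmk 0 0 (cos (angle k)) (sin (angle k))
  else qmk (cos (angle k)) (sin (angle k)) 0 0.

Lemma angleD k l : angle (k + l) = angle k + angle l.
Proof. by rewrite /angle intrD mulrDl. Qed.

Lemma angleN k : angle (- k) = - angle k.
Proof. by rewrite /angle intrN mulNr. Qed.

Lemma angle_n : angle n = pi.
Proof. by rewrite /angle pmulrn mulrCA divff ?mulr1 // pnatr_eq0 -lt0n. Qed.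

Lemma angle_2n_mul (t : int) : angle ((2 * n)%N%:Z * t) = pi *+ 2 *~ t.
Proof.
have n_neq0 : n%:R != 0 :> R by rewrite pnatr_eq0 -lt0n.
by rewrite /angle -mulrzr intrM -pmulrn natrM -mulr_natl; field.
Qed.

Lemma dic_mulFF k l : qmul (dic k false) (dic l false) = dic (k + l) false.
Proof. by rewrite /dic /qmul /qmk angleD cosD sinD; congr (_,_,_,_); ring. Qed.

Lemma dic_mulFT k l : qmul (dic k false) (dic l true) = dic (k + l) true.
Proof. by rewrite /dic /qmul /qmk angleD cosD sinD; congr (_,_,_,_); ring. Qed.

Lemma dic_mulTF k l : qmul (dic k true) (dic l false) = dic (k - l) true.
Proof.
by rewrite /dic /qmul /qmk angleD angleN cosD sinD cosN sinN; congr (_,_,_,_); ring.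
Qed.

Lemma dic_mulTT k l : qmul (dic k true) (dic l true) = dic (k - l + n) false.
Proof.
rewrite /dic /qmul /qmk angleD angle_n cosDpi sinDpi angleD angleN.
by rewrite cosD sinD cosN sinN; congr (_,_,_,_); ring.
Qed.

Lemma dic_invF k : qinv (dic k false) = dic (- k) false.
Proof.
rewrite /dic /qinv /qmk angleN cosN sinN expr0n /= !addr0 cos2Dsin2.
by rewrite !divr1 ?oppr0 ?mul0r.
Qed.

Lemma dic_invT k : qinv (dic k true) = dic (k + n) true.
Proof.
rewrite /dic /qinv /qmk angleD angle_n cosDpi sinDpi expr0n /= !add0r cos2Dsin2.
by rewrite !divr1 ?oppr0 ?mul0r.
Qed.

Lemma dic_circFF k l : qcirc (dic k false) (dic l false) = dic (k + k - l) false.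
Proof. by rewrite /qcirc dic_invF !dic_mulFF; congr dic; ring. Qed.

Lemma dic_circTT k l : qcirc (dic k true) (dic l true) = dic (k + k - l) true.
Proof. by rewrite /qcirc dic_invT dic_mulTT dic_mulFT; congr dic; ring. Qed.

Lemma dic_circFT k l : qcirc (dic k false) (dic l true) = dic (l + n) true.
Proof. by rewrite /qcirc dic_invT dic_mulFT dic_mulTF; congr dic; ring. Qed.

Lemma dic_circTF k l : qcirc (dic k true) (dic l false) = dic (l + n) false.
Proof. by rewrite /qcirc dic_invF dic_mulTF dic_mulTT; congr dic; ring. Qed.

Lemma dic0F : dic 0 false = qone R.
Proof. by rewrite /dic /angle mul0r cos0 sin0. Qed.

Lemma dic0T : dic 0 true = qj R.
Proof. by rewrite /dic /angle mul0r cos0 sin0. Qed.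

Lemma dic1F : dic 1 false = omega R n.
Proof. by rewrite /dic /angle mul1r. Qed.

Lemma dicFj k : qmul (dic k false) (qj R) = dic k true.
Proof. by rewrite -dic0T dic_mulFT addr0. Qed.

Lemma qexp_omega (m : nat) : qexp (omega R n) m = dic m false.
Proof.
elim: m => [|m IH]; first by rewrite dic0F.
by rewrite /qexp iterS -/(qexp _ _) IH -dic1F dic_mulFF addrC -PoszD addn1.
Qed.

Lemma dic_eq_mod k l e : ((2 * n)%N%:Z %| k - l)%Z -> dic k e = dic l e.
Proof.
move=> /dvdzP [t kl]; rewrite -(subrK l k) kl mulrC addrC /dic angleD angle_2n_mul.
by rewrite (periodicz (@cosD2pi R)) (periodicz (@sinD2pi R)).
Qed.

Lemma cos_angle_eq1 k : cos (angle k) = 1 -> ((2 * n)%N%:Z %| k)%Z.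
Proof.
move=> cos_k; apply/dvdz_mod0P.
have N_gt0 : (0 < (2 * n)%N%:Z)%R by rewrite ltz_nat muln_gt0 n_gt0.
have pin_gt0 : 0 < pi / n%:R :> R by rewrite divr_gt0 ?pi_gt0 ?ltr0n.
have k_eq : k = (k %% (2 * n)%N)%Z + (2 * n)%N%:Z * (k %/ (2 * n)%N)%Z.
  by rewrite addrC mulrC -divz_eq.
set r := (k %% _)%Z.
have r_ge0 : 0 <= r by rewrite modz_ge0 // gt_eqF.
have r_lt : r < (2 * n)%N%:Z by rewrite ltz_pmod.
suff : angle r = 0 by move/eqP; rewrite /angle mulf_eq0 (gt_eqF pin_gt0) orbF intr_eq0 => /eqP.
apply: cos_eq1_lt2pi.
  rewrite mulr_ge0 ?ler0z ?(ltW pin_gt0) //=.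
  have <- : angle (2 * n)%N = pi *+ 2 by rewrite -[X in angle X]mulr1 angle_2n_mul.
  by rewrite /angle ltr_pM2r // ltr_int.
by rewrite -cos_k [in RHS]k_eq angleD angle_2n_mul (periodicz (@cosD2pi R)).
Qed.

Lemma dic_inj k l e f : dic k e = dic l f -> e = f /\ ((2 * n)%N%:Z %| k - l)%Z.
Proof.
have cos_sin_neq0 (x : R) : cos x = 0 -> sin x = 0 -> False.
  move=> c0 s0; have := cos2Dsin2 x; rewrite c0 s0 expr0n /= addr0 => /eqP.
  by rewrite eq_sym oner_eq0.
have cos_diff (x y : R) : cos x = cos y -> sin x = sin y -> cos (x - y) = 1.
  by move=> cxy sxy; rewrite cosB cxy sxy -!expr2 cos2Dsin2.
rewrite /dic /qmk; case: e; case: f => -[].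
- by move=> cs ss; split => //; apply: cos_angle_eq1; rewrite angleD angleN cos_diff.
- by move=> _ _ c0 s0; case: (cos_sin_neq0 _ c0 s0).
- by move=> c0 s0 _ _; case: (cos_sin_neq0 _ c0 s0).
- by move=> cs ss; split => //; apply: cos_angle_eq1; rewrite angleD angleN cos_diff.
Qed.

Lemma dicF_Dic (k : int) : Dic R n (dic k false).
Proof.
have dic_nat (m : nat) : Dic R n (dic m false).
  elim: m => [|m IH]; first by rewrite dic0F; exact: gen_one.
  rewrite -addn1 PoszD -dic_mulFF dic1F; apply: gen_mul => //.
  by apply: gen_base; left.
case: k => m; first exact: dic_nat.
by rewrite NegzE -dic_invF; exact: gen_inv (dic_nat m.+1).
Qed.

Lemma DicP x : Dic R n x <-> exists k e, x = dic k e.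
Proof.
split; last first.
  move=> [k [[] ->]]; last exact: dicF_Dic.
  by rewrite -dicFj; apply: gen_mul; [exact: dicF_Dic | apply: gen_base; right].
elim=> [y [->|->]| |y z _ [k [e ->]] _ [l [f ->]]|y _ [k [e ->]]].
- by exists 1, false; rewrite dic1F.
- by exists 0, true; rewrite dic0T.
- by exists 0, false; rewrite dic0F.
- by case: e; case: f; rewrite ?dic_mulFF ?dic_mulFT ?dic_mulTF ?dic_mulTT; do 2 eexists.
- by case: e; rewrite ?dic_invF ?dic_invT; do 2 eexists.
Qed.

Definition Lset (a b : nat) (c : int) : set (quat R) :=
  fun q => exists k e, q = dic k e /\
    (if e then (b%:Z %| k - c)%Z else (a%:Z %| k)%Z).

Lemma Lset_rot a b c k : (a%:Z %| k)%Z -> Lset a b c (dic k false).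
Proof. by exists k, false. Qed.

Lemma Lset_refl a b c k : (b%:Z %| k - c)%Z -> Lset a b c (dic k true).
Proof. by exists k, true. Qed.

Lemma Lset_Dic a b c q : Lset a b c q -> Dic R n q.
Proof. by move=> [k [e [-> _]]]; apply/DicP; exists k, e. Qed.

Section LsetDivisors.
Variables a b : nat.
Hypotheses (a_dvd_n : (a %| n)%N) (b_dvd_n : (b %| n)%N).

Let dvd_n d : (d %| n)%N -> (d%:Z %| (2 * n)%N%:Z)%Z.
Proof. by move=> dn; rewrite PoszM dvdz_mull. Qed.

Lemma Lset_dic c k e :
  Lset a b c (dic k e) <-> (if e then (b%:Z %| k - c)%Z else (a%:Z %| k)%Z).
Proof.
split; last by exists k, e.
move=> [l [f [/dic_inj [<- kl] hl]]].
case: e hl => hl.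
- by rewrite -(subrK l k) -addrA rpredD // (dvdz_trans (dvd_n b_dvd_n)).
- by rewrite -(subrK l k) rpredD // (dvdz_trans (dvd_n a_dvd_n)).
Qed.

Lemma Lset_circ c x y : Lset a b c x -> Lset a b c y -> Lset a b c (qcirc x y).
Proof.
have an : (a%:Z %| n%:Z)%Z by [].
have bn : (b%:Z %| n%:Z)%Z by [].
move=> [k [e [-> hk]]] [l [f [-> hl]]].
case: e hk; case: f hl => hl hk;
  rewrite ?dic_circTT ?dic_circTF ?dic_circFT ?dic_circFF Lset_dic.
- have -> : k + k - l - c = (k - c) + (k - c) - (l - c) by ring.
  by rewrite rpredB // rpredD.
- by rewrite rpredD.
- have -> : l + n - c = (l - c) + n by ring.
  by rewrite rpredD.
- by rewrite rpredB // rpredD.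
Qed.

Lemma LabE : Lab R n a b = Lset a b 0.
Proof.
rewrite predeqE => q; split.
  elim=> [y [->|->|->|->]|y z _ Ly _ Lz]; last exact: Lset_circ.
  - by rewrite -dic0F Lset_dic dvdz0.
  - by rewrite qexp_omega Lset_dic dvdzz.
  - by rewrite -dic0T Lset_dic subr0 dvdz0.
  - by rewrite qexp_omega dicFj Lset_dic subr0 dvdzz.
move=> [k [[] [->]]]; rewrite ?subr0 => /dvdzP [t ->].
- apply: (reflect_closed_mul (P := fun x => Lab R n a b (dic x true))).
  + by apply: Lclos_base; rewrite dic0T; exact: Or43.
  + by move=> x y Lx Ly; rewrite -dic_circTT; exact: Lclos_circ.
  + by apply: Lclos_base; rewrite -dicFj -qexp_omega; exact: Or44.
- apply: (reflect_closed_mul (P := fun x => Lab R n a b (dic x false))).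
  + by apply: Lclos_base; rewrite dic0F; exact: Or41.
  + by move=> x y Lx Ly; rewrite -dic_circFF; exact: Lclos_circ.
  + by apply: Lclos_base; rewrite -qexp_omega; exact: Or42.
Qed.

Lemma gen_Lset_gcd c x : gen (Lset a b c) x -> Lset (gcdn a b) (gcdn a b) c x.
Proof.
set g := gcdn a b.
have gn : (g%:Z %| n%:Z)%Z := dvdn_trans (dvdn_gcdl a b) a_dvd_n.
have ga : (g%:Z %| a%:Z)%Z := dvdn_gcdl a b.
have gb : (g%:Z %| b%:Z)%Z := dvdn_gcdr a b.
apply: gen_sub.
- move=> y [k [[] [-> hk]]]; [apply: Lset_refl | apply: Lset_rot];
    exact: dvdz_trans hk.
- by rewrite -dic0F; apply: Lset_rot; rewrite dvdz0.
- move=> y z [k [e [-> hk]]] [l [f [-> hl]]].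
  case: e hk; case: f hl => hl hk.
  + rewrite dic_mulTT; apply: Lset_rot.
    have -> : k - l + n = (k - c) - (l - c) + n by ring.
    by rewrite rpredD // rpredB.
  + rewrite dic_mulTF; apply: Lset_refl.
    have -> : k - l - c = (k - c) - l by ring.
    by rewrite rpredB.
  + rewrite dic_mulFT; apply: Lset_refl.
    have -> : k + l - c = k + (l - c) by ring.
    by rewrite rpredD.
  + by rewrite dic_mulFF; apply: Lset_rot; rewrite rpredD.
- move=> y [k [e [-> hk]]].
  case: e hk => hk.
  + rewrite dic_invT; apply: Lset_refl.
    have -> : k + n - c = (k - c) + n by ring.
    by rewrite rpredD.
  + by rewrite dic_invF; apply: Lset_rot; rewrite rpredN.
Qed.

Lemma gen_Lset_coprime c x : coprime a b -> Dic R n x -> gen (Lset a b c) x.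
Proof.
move=> ab_coprime /DicP [k [e ->]].
have gen_a (t : int) : gen (Lset a b c) (dic (t * a) false).
  by apply/gen_base/Lset_rot; exact: dvdz_mull (dvdzz _).
have gen_b (t : int) : gen (Lset a b c) (dic (t * b) false).
  have -> : dic (t * b) false = qmul (dic (c + t * b) true) (qinv (dic c true)).
    by rewrite dic_invT dic_mulTT; congr dic; ring.
  apply: gen_mul; last apply: gen_inv; apply/gen_base/Lset_refl.
    by rewrite (addrC c) addrK; exact: dvdz_mull (dvdzz _).
  by rewrite subrr dvdz0.
have [u [v uv]] := Bezoutz a b.
have {}uv : u * a + v * b = 1 by rewrite uv /gcdz /= (eqP ab_coprime).
have gen_rot (l : int) : gen (Lset a b c) (dic l false).
  rewrite -[l]mulr1 -uv mulrDr !mulrA -dic_mulFF.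
  exact: gen_mul (gen_a _) (gen_b _).
case: e; last exact: gen_rot.
rewrite -(subrK c k) -dic_mulFT; apply: gen_mul => //.
by apply/gen_base/Lset_refl; rewrite subrr dvdz0.
Qed.

Lemma Lset_reflection_system c :
  coprime a b -> reflection_system (Dic R n) (Lset a b c).
Proof.
move=> ab_coprime; split.
- exact: Lset_Dic.
- move=> x; split; last exact: gen_Lset_coprime.
  apply: gen_sub; [exact: Lset_Dic | exact: gen_one | exact: gen_mul | exact: gen_inv].
- exact: Lset_circ.
- by rewrite -dic0F Lset_dic dvdz0.
Qed.

End LsetDivisors.

(* The automorphism of [Dic] fixing [omega] and sending [j] to [omega ^ c * j]. *)
Definition jrot (c : int) (q : quat R) : quat R :=
  let: (x1, x2, x3, x4) := q in
  qmk x1 x2 (cos (angle c) * x3 - sin (angle c) * x4)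
            (cos (angle c) * x4 + sin (angle c) * x3).

Lemma jrot_dicF c k : jrot c (dic k false) = dic k false.
Proof. by rewrite /jrot /dic /qmk; congr (_,_,_,_); ring. Qed.

Lemma jrot_dicT c k : jrot c (dic k true) = dic (k + c) true.
Proof. by rewrite /jrot /dic /qmk angleD cosD sinD; congr (_,_,_,_); ring. Qed.

Lemma jrot_aut c : is_aut (Dic R n) (jrot c).
Proof.
have jrotK k e : jrot (- c) (jrot c (dic k e)) = dic k e.
  by case: e; rewrite !(jrot_dicT, jrot_dicF) ?addrK.
split.
- by move=> x /DicP [k [[] ->]]; rewrite (jrot_dicT, jrot_dicF); apply/DicP; do 2 eexists.
- move=> x y /DicP [k [e ->]] /DicP [l [f ->]] eq_jrot.
  by rewrite -(jrotK k e) -(jrotK l f) eq_jrot.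
- move=> z /DicP [k [e ->]]; exists (jrot (- c) (dic k e)).
    by case: e; rewrite (jrot_dicT, jrot_dicF); apply/DicP; do 2 eexists.
  by case: e; rewrite !(jrot_dicT, jrot_dicF) ?subrK.
- move=> x y /DicP [k [e ->]] /DicP [l [f ->]].
  case: e; case: f;
    rewrite ?dic_mulFF ?dic_mulFT ?dic_mulTF ?dic_mulTT !(jrot_dicT, jrot_dicF)
            ?dic_mulFF ?dic_mulFT ?dic_mulTF ?dic_mulTT //; congr dic; ring.
Qed.

Lemma Lset_equiv_shift a b c : rs_equiv (Dic R n) (Lset a b c) (Lset a b 0).
Proof.
exists (dic 0 false), (jrot (- c)); split.
- exact: Lset_rot (dvdz0 _).
- exact: jrot_aut.
left=> q; split.
  move=> [k [[] [-> hk]]].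
  - exists (dic (k + c) true); first by apply: Lset_refl; rewrite addrK -(subr0 k).
    by rewrite dic_mulFT jrot_dicT add0r addrK.
  - exists (dic k false); first exact: Lset_rot.
    by rewrite dic_mulFF jrot_dicF add0r.
move=> [y [k [[] [-> hk]]] ->].
- by rewrite dic_mulFT jrot_dicT add0r; apply: Lset_refl; rewrite subr0.
- by rewrite dic_mulFF jrot_dicF add0r; apply: Lset_rot.
Qed.

(* Left multiplication by the reflection [omega ^ c * j] swaps the roles of
   rotations and reflections. *)
Lemma Lset_equiv_swap a b c : (b %| n)%N ->
  rs_equiv (Dic R n) (Lset a b c) (Lset b a 0).
Proof.
move=> b_dvd_n; have bn : (b%:Z %| n%:Z)%Z by [].
exists (dic c true), (jrot (- c)); split.
- by apply: Lset_refl; rewrite subrr dvdz0.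
- exact: jrot_aut.
left=> q; split.
  move=> [k [[] [-> hk]]].
  - exists (dic (- k) false); first by apply: Lset_rot; rewrite rpredN -(subr0 k).
    by rewrite dic_mulTF jrot_dicT opprK addrAC subrr add0r.
  - exists (dic (c + n - k) true).
      apply: Lset_refl; have -> : c + n - k - c = n%:Z - k by ring.
      by rewrite rpredB.
    by rewrite dic_mulTT jrot_dicF; congr dic; ring.
move=> [y [k [[] [-> hk]]] ->].
- rewrite dic_mulTT jrot_dicF; apply: Lset_rot.
  have -> : c - k + n = n%:Z - (k - c) by ring.
  by rewrite rpredB.
- rewrite dic_mulTF jrot_dicT; apply: Lset_refl.
  have -> : c - k + - c - 0 = - k by ring.
  by rewrite rpredN.
Qed.


Lemma reflection_system_Lset L : reflection_system (Dic R n) L ->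
  exists a b c, [/\ (a %| n)%N, (b %| n)%N, coprime a b & L = Lset a b c].
Proof.
case=> L_Dic L_gen L_circ L1.
have L_dic x : L x -> exists k e, x = dic k e by move=> /L_Dic /DicP.
have [[c Lc]|no_refl] := pselect (exists c, L (dic c true)); last first.
  have rot_gen : forall x, gen L x -> exists k, x = dic k false.
    apply: (gen_sub (H := fun x => exists k, x = dic k false))
      => [y Ly| |y z [k ->] [l ->]|y [k ->]].
    - have [k [[] eq_y]] := L_dic y Ly; last by exists k.
      by case: no_refl; exists k; rewrite -eq_y.
    - by exists 0; rewrite dic0F.
    - by exists (k + l); rewrite dic_mulFF.
    - by exists (- k); rewrite dic_invF.
  have [k] := rot_gen _ ((L_gen (qj R)).2 (gen_base (or_intror erefl))).
  by rewrite -dic0T => /dic_inj [].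
have L0 : L (dic 0 false) by rewrite dic0F.
have [a [_ a_dvd_n rotP]] : exists a : nat,
    [/\ (0 < a)%N, (a %| n)%N & forall k, L (dic k false) <-> (a%:Z %| k)%Z].
  apply: reflect_closed_dvd n_gt0 _ => //.
  - by move=> x y Lx Ly; rewrite -dic_circFF; exact: L_circ.
  - by rewrite -[n%:Z]add0r -(dic_circTF c); exact: L_circ.
have [b [_ b_dvd_n reflP]] : exists b : nat,
    [/\ (0 < b)%N, (b %| n)%N & forall k, L (dic (c + k) true) <-> (b%:Z %| k)%Z].
  apply: reflect_closed_dvd n_gt0 _; first by rewrite addr0.
  - move=> x y Lx Ly.
    have -> : c + (x + x - y) = (c + x) + (c + x) - (c + y) by ring.
    by rewrite -dic_circTT; exact: L_circ.
  - by rewrite -(dic_circFT 0); exact: L_circ.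
have L_eq : L = Lset a b c.
  rewrite predeqE => q; split.
    move=> Lq; have [k [[] eq_q]] := L_dic q Lq; rewrite eq_q in Lq *.
    + by apply: Lset_refl; rewrite -reflP addrC subrK.
    + by apply: Lset_rot; rewrite -rotP.
  move=> [k [[] [-> hk]]]; last exact/rotP.
  by move/reflP: hk; rewrite addrC subrK.
have g_dvd_n : (gcdn a b %| n)%N := dvdn_trans (dvdn_gcdl a b) a_dvd_n.
have : Lset (gcdn a b) (gcdn a b) c (dic 1 false).
  apply: (gen_Lset_gcd a_dvd_n); rewrite -L_eq; apply/L_gen.
  by rewrite dic1F; apply: gen_base; left.
rewrite (Lset_dic g_dvd_n g_dvd_n) => g_dvd_1.
by exists a, b, c; split => //; rewrite /coprime -dvdn1.
Qed.


Definition Lseq (a b : nat) : seq (quat R) :=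
  [seq qexp (omega R n) (m * a)%N | m <- iota 1 ((2 * n) %/ a)] ++
  [seq qmul (qexp (omega R n) (l * b)%N) (qj R) | l <- iota 1 ((2 * n) %/ b)].

Lemma mem_Lseq a b q : q \in Lseq a b <->
  (exists m : nat, [/\ (1 <= m)%N, (m <= (2 * n) %/ a)%N &
                       q = qexp (omega R n) (m * a)%N]) \/
  (exists l : nat, [/\ (1 <= l)%N, (l <= (2 * n) %/ b)%N &
                       q = qmul (qexp (omega R n) (l * b)%N) (qj R)]).
Proof.
rewrite mem_cat; split.
  by case/orP=> /mapP [m]; rewrite mem_iota => m_range ->; [left | right];
    exists m; split => //; lia.
by case=> -[m [m_ge1 m_le ->]]; apply/orP; [left | right];
  apply: map_f; rewrite mem_iota; lia.
Qed.

Lemma Lset0_Lseq a b q : (a %| n)%N -> (b %| n)%N ->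
  Lset a b 0 q <-> q \in Lseq a b.
Proof.
move=> a_dvd_n b_dvd_n.
have N_gt0 : (0 < 2 * n)%N by rewrite muln_gt0.
have dvd_2n d : (d %| n)%N -> (d %| 2 * n)%N by move=> /dvdn_mull.
rewrite mem_Lseq; split.
  move=> [k [[] [-> hk]]]; rewrite ?subr0 in hk.
  - have [m /andP [m_ge1 m_le] dvd_km] := dvdz_mul_rep N_gt0 (dvd_2n _ b_dvd_n) hk.
    right; exists m; split => //.
    by rewrite qexp_omega dicFj; apply: dic_eq_mod.
  - have [m /andP [m_ge1 m_le] dvd_km] := dvdz_mul_rep N_gt0 (dvd_2n _ a_dvd_n) hk.
    left; exists m; split => //.
    by rewrite qexp_omega; apply: dic_eq_mod.
case=> -[m [_ _ ->]]; rewrite qexp_omega ?dicFj.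
- by apply: Lset_rot; rewrite PoszM dvdz_mull.
- by apply: Lset_refl; rewrite subr0 PoszM dvdz_mull.
Qed.

Lemma uniq_Lseq a b : uniq (Lseq a b).
Proof.
have dic_mul_inj d e m m' : m \in iota 1 ((2 * n) %/ d) -> m' \in iota 1 ((2 * n) %/ d) ->
    dic (m * d)%N e = dic (m' * d)%N e -> m = m'.
  rewrite !mem_iota => m_range m'_range /dic_inj [_].
  by apply: dvdz_mul_inj; apply/andP; split; lia.
rewrite cat_uniq !map_inj_in_uniq ?iota_uniq ?andbT //=.
- apply/hasPn => _ /mapP [l _ ->]; apply/mapP => -[m _].
  by rewrite !qexp_omega dicFj => /dic_inj [].
- by move=> m m' m_in m'_in; rewrite !qexp_omega !dicFj; exact: dic_mul_inj.
- by move=> m m' m_in m'_in; rewrite !qexp_omega; exact: dic_mul_inj.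
Qed.

Lemma size_Lseq a b : size (Lseq a b) = ((2 * n) %/ a + (2 * n) %/ b)%N.
Proof. by rewrite size_cat !size_map !size_iota. Qed.

End Dicyclic.

Local Close Scope ring_scope.

Lemma coprime_mul_add x y : coprime x y -> coprime (x * y) (x + y).
Proof.
move=> xy_coprime; rewrite coprimeMl /coprime gcdnDl; apply/andP; split => //.
by rewrite addnC gcdnDl gcdnC.
Qed.

Lemma Omega_n_card n a b :
  Omega_n n a b -> ((2 * n) %/ a + (2 * n) %/ b) * (a * b) = 2 * n * (a + b).
Proof.
rewrite /Omega_n => /and5P [_ _ _ a_dvd_n /andP [b_dvd_n _]].
rewrite mulnDl mulnA divnK ?dvdn_mull // (mulnC a) mulnA divnK ?dvdn_mull //.
by rewrite mulnDr addnC.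
Qed.

(* [(a + b) / (a b)] and [(a' + b') / (a' b')] are in lowest terms. *)
Lemma coprime_sum_prod_eq a b a' b' :
  0 < a * b -> 0 < a' * b' -> coprime a b -> coprime a' b' ->
  (a + b) * (a' * b') = (a' + b') * (a * b) -> a * b = a' * b' /\ a + b = a' + b'.
Proof.
move=> ab_gt0 ab'_gt0 ab_coprime ab'_coprime eq_cross.
have dvd1 : a * b %| a' * b'.
  by rewrite -(Gauss_dvdr _ (coprime_mul_add ab_coprime)) eq_cross dvdn_mull.
have dvd2 : a' * b' %| a * b.
  by rewrite -(Gauss_dvdr _ (coprime_mul_add ab'_coprime)) -eq_cross dvdn_mull.
have eq_prod : a * b = a' * b' by apply/eqP; rewrite eqn_dvd dvd1 dvd2.
split => //; apply/eqP.
by rewrite -(eqn_pmul2r ab'_gt0) eq_cross eq_prod.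
Qed.

Lemma sum_prod_inj a b a' b' : a <= b -> a' <= b' ->
  a * b = a' * b' -> a + b = a' + b' -> (a, b) = (a', b').
Proof.
move=> ab ab' eq_prod eq_sum.
have eq_a : a = a' by nia.
by congr pair => //; lia.
Qed.

Lemma Omega_n_card_inj n a b a' b' : 0 < n ->
  Omega_n n a b -> Omega_n n a' b' ->
  (2 * n) %/ a + (2 * n) %/ b = (2 * n) %/ a' + (2 * n) %/ b' -> (a, b) = (a', b').
Proof.
move=> n_gt0 Oab Oab' eq_card.
have := Omega_n_card Oab; have := Omega_n_card Oab'.
move: Oab; rewrite /Omega_n => /and5P [a_gt0 ab _ _ /andP [_ ab_coprime]].
move: Oab'; rewrite /Omega_n => /and5P [a'_gt0 ab' _ _ /andP [_ ab'_coprime]].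
have ab_gt0 : 0 < a * b by rewrite muln_gt0 a_gt0; lia.
have ab'_gt0 : 0 < a' * b' by rewrite muln_gt0 a'_gt0; lia.
rewrite eq_card => card_ab' card_ab.
have eq_cross : (a + b) * (a' * b') = (a' + b') * (a * b).
  apply/eqP; rewrite -(eqn_pmul2l (_ : 0 < 2 * n)) ?muln_gt0 // !mulnA -card_ab -card_ab'.
  by apply/eqP; ring.
have [eq_prod eq_sum] := coprime_sum_prod_eq ab_gt0 ab'_gt0 ab_coprime ab'_coprime eq_cross.
exact: sum_prod_inj.
Qed.

Theorem lemma5p2 (R : realType) (n : nat) (hn : (2 <= n)%N) :
  (forall a b : nat, Omega_n n a b ->
     [/\ reflection_system (Dic R n) (Lab R n a b),
         (forall q, Lab R n a b q <->
            (exists m : nat, [/\ (1 <= m)%N, (m <= (2 * n) %/ a)%N &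
                                 q = qexp (omega R n) (m * a)]) \/
            (exists l : nat, [/\ (1 <= l)%N, (l <= (2 * n) %/ b)%N &
                                 q = qmul (qexp (omega R n) (l * b)) (qj R)])) &
         exists s : seq (quat R),
           [/\ uniq s, (forall q, Lab R n a b q <-> q \in s) &
               size s = ((2 * n) %/ a + (2 * n) %/ b)%N]]) /\
  (forall L, reflection_system (Dic R n) L ->
     exists a b : nat, Omega_n n a b /\ rs_equiv (Dic R n) L (Lab R n a b)) /\
  (forall a b a' b' : nat, Omega_n n a b -> Omega_n n a' b' -> (a, b) <> (a', b') ->
     ((2 * n) %/ a + (2 * n) %/ b)%N <> ((2 * n) %/ a' + (2 * n) %/ b')%N).
Proof.
have n_gt0 : 0 < n by apply: ltnW.
split; [|split].
- move=> a b; rewrite /Omega_n => /and5P [_ _ _ a_dvd_n /andP [b_dvd_n ab_coprime]].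
  have LabP q : Lab R n a b q <-> q \in Lseq R n a b by rewrite LabE // Lset0_Lseq.
  split.
  + by rewrite LabE //; exact: Lset_reflection_system.
  + by move=> q; apply: iff_trans (LabP q) (mem_Lseq _ _ _ _).
  + by exists (Lseq R n a b); split; [exact: uniq_Lseq | exact: LabP | exact: size_Lseq].
- move=> L /(reflection_system_Lset n_gt0) [a [b [c [a_dvd_n b_dvd_n ab_coprime ->]]]].
  have a_gt0 := dvdn_gt0 n_gt0 a_dvd_n; have b_gt0 := dvdn_gt0 n_gt0 b_dvd_n.
  have [ab|ba] := leqP a b.
  + exists a, b; rewrite LabE //; split; last exact: Lset_equiv_shift.
    by rewrite /Omega_n a_gt0 ab (dvdn_leq n_gt0 b_dvd_n) a_dvd_n b_dvd_n.
  + exists b, a; rewrite LabE //; split; last exact: Lset_equiv_swap.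
    rewrite /Omega_n b_gt0 (ltnW ba) (dvdn_leq n_gt0 a_dvd_n) b_dvd_n a_dvd_n.
    by rewrite coprime_sym.
- by move=> a b a' b' Oab Oab' neq /(Omega_n_card_inj n_gt0 Oab Oab').
Qed.
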